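(* Consider the controlled SI optimal control problem described in the context, with one control per node ($M=N$) and given (fixed) initial conditions. Let $(\boldsymbol i^*(t), \boldsymbol\lambda^*(t), \boldsymbol u^*(t))$, $t\in[0,T]$, be an optimal state trajectory, its associated adjoint trajectory, and optimal controls satisfying the Pontryagin Maximum Principle conditions listed in the context. Then each optimal control $u_j^*(t)$, $1\le j\le N$, is a non-increasing function of $t$ on $[0,T]$.
   Context: Let $N\geq 1$, and let $\boldsymbol A=(A_{jk})$ be an $N\times N$ symmetric matrix with entries in $\{0,1\}$ (adjacency matrix of an undirected, unweighted network on nodes $1,\dots,N$). Fix $\beta>0$, a horizon $T>0$, and initial values $x_{0j}\in[0,1]$. Each node $j$ has its own control $u_j(t)$. The state $i_j(t)\in[0,1]$ (probability node $j$ is informed), with $s_j(t)=1-i_j(t)$, evolves by $\dot i_j(t)=\beta s_j(t)\sum_{k=1}^N A_{jk}i_k(t)+u_j(t)s_j(t)$, $i_j(0)=x_{0j}$, $1\le j\le N$. The objective to be maximized is $J=\frac1N\sum_{j=1}^N i_j(T)-\sum_{j=1}^N\int_0^T g_j(u_j(t))\,dt$, where each $g_j:\mathbb R\to\mathbb R$ is twice differentiable, strictly convex, even, increasing on $[0,\infty)$, and satisfies $g_j(0)=0$. The optimal controls are nonnegative: $u_j^*(t)\ge 0$. The Hamiltonian is $H(\boldsymbol i,\boldsymbol\lambda,\boldsymbol u)=-\sum_{j=1}^N g_j(u_j)+\sum_{l=1}^N\lambda_l\big(\beta s_l\sum_{k=1}^N A_{lk}i_k+u_l s_l\big)$ with $s_l=1-i_l$.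 The Pontryagin conditions are: $\boldsymbol i^*$ solves the state equations above; the adjoint variables satisfy $\dot\lambda_j^*(t)=-\beta\sum_{l=1}^N\lambda_l^*(t)s_l^*(t)A_{lj}+\beta\lambda_j^*(t)\sum_{k=1}^N A_{jk}i_k^*(t)+\lambda_j^*(t)u_j^*(t)$ with $\lambda_j^*(T)=1/N$; and for each $t$, $\boldsymbol u^*(t)$ maximizes $H(\boldsymbol i^*(t),\boldsymbol\lambda^*(t),\cdot)$, which gives $g_j'(u_j^*(t))=\lambda_j^*(t)s_j^*(t)$ for each $j$. *)

From Stdlib Require Import Reals.
From Coquelicot Require Import Coquelicot.
Open Scope R_scope.

Fixpoint rsum (n : nat) (f : nat -> R) : R :=
  match n with
  | O => 0
  | S m => rsum m f + f m
  end.

Definition strictly_convex (g : R -> R) : Prop :=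
  forall x y a, x <> y -> 0 < a < 1 ->
    g (a * x + (1 - a) * y) < a * g x + (1 - a) * g y.

Definition admissible_cost (g : R -> R) : Prop :=
  (forall x, ex_derive g x) /\
  (forall x, ex_derive (Derive g) x) /\
  strictly_convex g /\
  (forall x, g (- x) = g x) /\
  (forall x y, 0 <= x -> x <= y -> g x <= g y) /\
  g 0 = 0.

Definition hamiltonian (N : nat) (A : nat -> nat -> R) (beta : R)
    (g : nat -> R -> R) (i lam u : nat -> R) : R :=
  - rsum N (fun j => g j (u j))
  + rsum N (fun l => lam l * (beta * (1 - i l) * rsum N (fun k => A l k * i k)
                              + u l * (1 - i l))).

(* Write w_j = λ_j (1 - i_j). Maximality of the Hamiltonian in the j-th control alone says that
   w_j(t) is a subgradient of the convex cost g_j at u_j(t). Since g_j is even and increasing on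
   [0,∞) and u_j ≥ 0, this forces w_j ≥ 0 for every node. Along the state and adjoint equations
   the u-terms and the β λ_j Σ_k A_jk i_k terms cancel in the derivative of w_j, leaving
   w_j' = -β (1 - i_j) Σ_l w_l A_lj ≤ 0, so w_j is non-increasing. Finally, subgradients of a
   strictly convex function are strictly monotone, so u_j(t) follows w_j(t) downwards. *)
From Stdlib Require Import Reals Lra Lia.
From Coquelicot Require Import Coquelicot.
Open Scope R_scope.

Lemma rsum_ext n f h : (forall k, (k < n)%nat -> f k = h k) -> rsum n f = rsum n h.
Proof.
induction n as [|n IH]; intros Hfh; simpl; [reflexivity|].
rewrite IH by (intros; apply Hfh; lia). rewrite (Hfh n) by lia. reflexivity.
Qed.

Lemma rsum_nonneg n f : (forall k, (k < n)%nat -> 0 <= f k) -> 0 <= rsum n f.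
Proof.
induction n as [|n IH]; intros Hf; simpl; [lra|].
pose proof (Hf n ltac:(lia)). pose proof (IH ltac:(intros; apply Hf; lia)). lra.
Qed.

Lemma rsum_diff_single n f h j : (j < n)%nat ->
  (forall k, (k < n)%nat -> k <> j -> f k = h k) ->
  rsum n f - rsum n h = f j - h j.
Proof.
induction n as [|n IH]; intros Hj Hfh; [lia|]. simpl.
destruct (Nat.eq_dec j n) as [->|Hjn].
- rewrite (rsum_ext n f h) by (intros; apply Hfh; lia). ring.
- rewrite (Hfh n) by lia.
  pose proof (IH ltac:(lia) ltac:(intros; apply Hfh; lia)). lra.
Qed.

Definition fupdate (u : nat -> R) (j : nat) (x : R) : nat -> R :=
  fun k => if Nat.eq_dec k j then x else u k.

Lemma hamiltonian_fupdate N A beta g i lam u j x : (j < N)%nat ->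
  hamiltonian N A beta g i lam (fupdate u j x) - hamiltonian N A beta g i lam u
  = lam j * (1 - i j) * (x - u j) - (g j x - g j (u j)).
Proof.
intros Hj. unfold hamiltonian.
assert (Hoff : forall k, k <> j -> fupdate u j x k = u k).
{ intros k Hk. unfold fupdate. destruct (Nat.eq_dec k j); congruence. }
assert (Hon : fupdate u j x j = x).
{ unfold fupdate. destruct (Nat.eq_dec j j); congruence. }
assert (Hcost := rsum_diff_single N (fun k => g k (fupdate u j x k)) (fun k => g k (u k)) j Hj
  ltac:(intros k _ Hk; cbv beta; now rewrite Hoff)).
assert (Hgain := rsum_diff_single N
  (fun l => lam l * (beta * (1 - i l) * rsum N (fun k => A l k * i k) + fupdate u j x l * (1 - i l)))
  (fun l => lam l * (beta * (1 - i l) * rsum N (fun k => A l k * i k) + u l * (1 - i l))) j Hj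
  ltac:(intros k _ Hk; cbv beta; now rewrite Hoff)).
cbv beta in Hcost, Hgain. rewrite Hon in Hcost, Hgain.
lra.
Qed.

Lemma subgradient_of_hamiltonian_max N A beta g i lam u j x : (j < N)%nat ->
  (forall v, hamiltonian N A beta g i lam v <= hamiltonian N A beta g i lam u) ->
  lam j * (1 - i j) * (x - u j) <= g j x - g j (u j).
Proof.
intros Hj Hmax.
pose proof (hamiltonian_fupdate N A beta g i lam u j x Hj).
pose proof (Hmax (fupdate u j x)). lra.
Qed.

Lemma Derive_even_0 (g : R -> R) :
  (forall x, ex_derive g x) -> (forall x, g (- x) = g x) -> Derive g 0 = 0.
Proof.
intros Hd Heven.
assert (E : Derive g 0 = Derive (fun x => g (- x)) 0).
{ apply Derive_ext. intros; symmetry; apply Heven. }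
rewrite (Derive_comp g (fun x => - x)) in E; [|apply Hd|auto_derive; auto].
rewrite (is_derive_unique (fun x : R => - x) 0 (-1)) in E by (auto_derive; auto; ring).
rewrite Ropp_0 in E. lra.
Qed.

(* At u > 0 the subgradient inequality towards 0 gives w u >= g u - g 0 >= 0; at u = 0 the
   subgradient is g'(0), which vanishes by evenness. *)
Lemma subgradient_nonneg (g : R -> R) (u w : R) :
  admissible_cost g -> 0 <= u -> Derive g u = w ->
  (forall x, w * (x - u) <= g x - g u) -> 0 <= w.
Proof.
intros (Hd & _ & _ & Heven & Hmono & _) Hu Hw Hsub.
destruct (Req_dec u 0) as [->|Hu0].
- rewrite <- Hw, (Derive_even_0 g Hd Heven). lra.
- pose proof (Hsub 0). pose proof (Hmono 0 u ltac:(lra) ltac:(lra)). nra.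
Qed.

(* Testing the subgradient w1 at the midpoint of [u1, u2] and using strict convexity there gives
   w1 < w2 whenever u1 < u2. *)
Lemma strictly_convex_subgradient_mono (g : R -> R) (u1 u2 w1 w2 : R) :
  strictly_convex g ->
  (forall x, w1 * (x - u1) <= g x - g u1) ->
  (forall x, w2 * (x - u2) <= g x - g u2) ->
  w2 <= w1 -> u2 <= u1.
Proof.
intros Hconv Hsub1 Hsub2 Hw.
destruct (Rle_lt_dec u2 u1) as [ok|Hlt]; [exact ok|exfalso].
pose proof (Hsub1 (/2 * u1 + (1 - /2) * u2)).
pose proof (Hsub2 u1).
pose proof (Hconv u1 u2 (/2) ltac:(lra) ltac:(lra)).
assert (w2 * (u2 - u1) <= w1 * (u2 - u1)) by (apply Rmult_le_compat_r; lra).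
lra.
Qed.

Lemma continuous_on_mult (D : R -> Prop) (f h : R -> R) :
  continuous_on D f -> continuous_on D h -> continuous_on D (fun t => f t * h t).
Proof.
intros Hf Hh x Dx.
apply (filterlim_comp_2 f h Rmult (Hf x Dx) (Hh x Dx)).
apply (@filterlim_mult R_AbsRing).
Qed.

Lemma continuous_on_plus (D : R -> Prop) (f h : R -> R) :
  continuous_on D f -> continuous_on D h -> continuous_on D (fun t => f t + h t).
Proof.
intros Hf Hh x Dx.
apply (filterlim_comp_2 f h Rplus (Hf x Dx) (Hh x Dx)).
apply (@filterlim_plus R_AbsRing R_NormedModule).
Qed.

Lemma continuous_on_one_minus (D : R -> Prop) (f : R -> R) :
  continuous_on D f -> continuous_on D (fun t => 1 - f t).
Proof.
intros Hf.
apply (continuous_on_ext D (fun t => 1 + (-1) * f t)); [intros t _; change (1 + -1 * f t = 1 - f t); ring|].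
apply continuous_on_plus; [intros x _; apply filterlim_const|].
apply continuous_on_mult; [intros x _; apply filterlim_const|exact Hf].
Qed.

Lemma nonincreasing_of_derive_nonpos_open (f df : R -> R) a b :
  (forall x, a < x < b -> is_derive f x (df x)) ->
  (forall x, a < x < b -> df x <= 0) ->
  forall x y, a < x -> x <= y -> y < b -> f y <= f x.
Proof.
intros Hd Hneg x y Hx Hxy Hy.
destruct (MVT_gen f x y df) as [c [Hc Hmvt]];
  rewrite Rmin_left, Rmax_right in * by lra.
- intros z Hz. apply Hd. lra.
- intros z Hz. apply continuity_pt_filterlim, (@ex_derive_continuous R_AbsRing R_NormedModule).
  eexists. apply Hd. lra.
- pose proof (Hneg c ltac:(lra)).
  assert (df c * (y - x) <= 0) by (apply Rmult_le_0_r; lra).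
  lra.
Qed.

Lemma continuous_on_eps (D : R -> Prop) (f : R -> R) x eps :
  continuous_on D f -> D x -> 0 < eps ->
  exists d, 0 < d /\ forall y, Rabs (y - x) < d -> D y -> Rabs (f y - f x) < eps.
Proof.
intros Hf Dx Heps.
destruct (proj1 (filterlim_locally _ _) (Hf x Dx) (mkposreal eps Heps)) as [d Hd].
exists d. split; [apply cond_pos|]. intros y Hy Dy. exact (Hd y Hy Dy).
Qed.

(* If f y > f x, continuity moves both points inwards by some h while keeping the gap
   f y - f x > 0, contradicting the monotonicity on the open interval. *)
Lemma nonincreasing_of_derive_nonpos (f df : R -> R) a b :
  (forall x, a < x < b -> is_derive f x (df x)) ->
  (forall x, a < x < b -> df x <= 0) ->
  continuous_on (fun t => a <= t <= b) f ->
  forall x y, a <= x -> x <= y -> y <= b -> f y <= f x.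
Proof.
intros Hd Hneg Hc x y Hx Hxy Hy.
destruct (Req_dec x y) as [->|Hne]; [lra|].
destruct (Rle_lt_dec (f y) (f x)) as [ok|Hgap]; [exact ok|exfalso].
set (eps := (f y - f x) / 2).
destruct (continuous_on_eps _ f x eps Hc ltac:(lra) ltac:(unfold eps; lra)) as [dx [Hdx Hnx]].
destruct (continuous_on_eps _ f y eps Hc ltac:(lra) ltac:(unfold eps; lra)) as [dy [Hdy Hny]].
set (h := Rmin dx (Rmin dy (y - x)) / 3).
assert (Hh : 0 < h /\ h < dx /\ h < dy /\ 2 * h < y - x).
{ assert (0 < Rmin dx (Rmin dy (y - x))) by (repeat apply Rmin_pos; lra).
  pose proof (Rmin_l dx (Rmin dy (y - x))). pose proof (Rmin_r dx (Rmin dy (y - x))).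
  pose proof (Rmin_l dy (y - x)). pose proof (Rmin_r dy (y - x)).
  unfold h. lra. }
pose proof (Hnx (x + h) ltac:(rewrite Rabs_pos_eq; lra) ltac:(lra)) as Hnear_x.
pose proof (Hny (y - h) ltac:(rewrite Rabs_left; lra) ltac:(lra)) as Hnear_y.
pose proof (nonincreasing_of_derive_nonpos_open f df a b Hd Hneg (x + h) (y - h)
  ltac:(lra) ltac:(lra) ltac:(lra)).
apply Rabs_lt_between' in Hnear_x. apply Rabs_lt_between' in Hnear_y.
unfold eps in *. lra.
Qed.

Lemma is_derive_mult_one_minus (l i : R -> R) t dl di :
  is_derive l t dl -> is_derive i t di ->
  is_derive (fun s => l s * (1 - i s)) t (dl * (1 - i t) - l t * di).
Proof.
intros Hl Hi.
pose proof (is_derive_mult l (fun s => minus 1 (i s)) t _ _ Hl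
  (is_derive_minus _ _ t _ _ (is_derive_const 1 t) Hi) Rmult_comm) as Hprod.
unfold mult, plus, minus, opp, zero in Hprod; simpl in Hprod.
unfold plus, opp in Hprod; simpl in Hprod.
replace (dl * (1 - i t) - l t * di) with (dl * (1 + - i t) + l t * (0 + - di)) by ring.
exact Hprod.
Qed.

Theorem theorem1
  (N : nat) (HN : (1 <= N)%nat)
  (A : nat -> nat -> R)
  (HA01 : forall j k, (j < N)%nat -> (k < N)%nat -> A j k = 0 \/ A j k = 1)
  (HAsym : forall j k, (j < N)%nat -> (k < N)%nat -> A j k = A k j)
  (beta T : R) (Hbeta : 0 < beta) (HT : 0 < T)
  (x0 : nat -> R) (Hx0 : forall j, (j < N)%nat -> 0 <= x0 j <= 1)
  (g : nat -> R -> R) (Hg : forall j, (j < N)%nat -> admissible_cost (g j))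
  (i lam u : nat -> R -> R)
  (* states in [0,1] *)
  (Hi01 : forall j t, (j < N)%nat -> 0 <= t <= T -> 0 <= i j t <= 1)
  (* optimal controls are nonnegative *)
  (Hu0 : forall j t, (j < N)%nat -> 0 <= t <= T -> 0 <= u j t)
  (* continuity of state and adjoint on [0,T] *)
  (Hicont : forall j, (j < N)%nat -> continuous_on (fun t => 0 <= t <= T) (i j))
  (Hlcont : forall j, (j < N)%nat -> continuous_on (fun t => 0 <= t <= T) (lam j))
  (* state equations *)
  (Hstate : forall j t, (j < N)%nat -> 0 < t < T ->
     is_derive (i j) t
       (beta * (1 - i j t) * rsum N (fun k => A j k * i k t) + u j t * (1 - i j t)))
  (Hinit : forall j, (j < N)%nat -> i j 0 = x0 j)
  (* adjoint equations *)
  (Hadj : forall j t, (j < N)%nat -> 0 < t < T ->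
     is_derive (lam j) t
       (- beta * rsum N (fun l => lam l t * (1 - i l t) * A l j)
        + beta * lam j t * rsum N (fun k => A j k * i k t)
        + lam j t * u j t))
  (Hterm : forall j, (j < N)%nat -> lam j T = 1 / INR N)
  (* maximization of the Hamiltonian over all controls v in R^N *)
  (Hmax : forall t, 0 <= t <= T -> forall v : nat -> R,
     hamiltonian N A beta g (fun k => i k t) (fun k => lam k t) v
     <= hamiltonian N A beta g (fun k => i k t) (fun k => lam k t) (fun k => u k t))
  (* the resulting first-order condition *)
  (Hfoc : forall j t, (j < N)%nat -> 0 <= t <= T ->
     Derive (g j) (u j t) = lam j t * (1 - i j t)) :
  forall j, (j < N)%nat ->
    forall t1 t2, 0 <= t1 -> t1 <= t2 -> t2 <= T -> u j t2 <= u j t1.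
Proof.
intros j Hj t1 t2 Ht1 Ht12 Ht2.
set (w := fun k t => lam k t * (1 - i k t)).
assert (Hsub : forall k t, (k < N)%nat -> 0 <= t <= T ->
  forall x, w k t * (x - u k t) <= g k x - g k (u k t)).
{ intros k t Hk Ht x.
  exact (subgradient_of_hamiltonian_max N A beta g _ _ (fun k => u k t) k x Hk (Hmax t Ht)). }
assert (Hw_nonneg : forall k t, (k < N)%nat -> 0 <= t <= T -> 0 <= w k t).
{ intros k t Hk Ht.
  exact (subgradient_nonneg _ _ _ (Hg k Hk) (Hu0 k t Hk Ht) (Hfoc k t Hk Ht) (Hsub k t Hk Ht)). }
assert (Hw_antitone : w j t2 <= w j t1).
{ apply (nonincreasing_of_derive_nonpos (w j)
    (fun t => - beta * rsum N (fun l => w l t * A l j) * (1 - i j t)) 0 T); try lra.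
  - intros t Ht.
    pose proof (is_derive_mult_one_minus _ _ t _ _ (Hadj j t Hj Ht) (Hstate j t Hj Ht)) as Hd.
    match type of Hd with is_derive _ _ ?d =>
      replace (- beta * _ * _) with d by (unfold w; ring) end.
    exact Hd.
  - intros t Ht.
    assert (0 <= rsum N (fun l => w l t * A l j)).
    { apply rsum_nonneg. intros l Hl.
      apply Rmult_le_pos; [apply Hw_nonneg; [exact Hl|lra]|].
      destruct (HA01 l j Hl Hj) as [-> | ->]; lra. }
    pose proof (Hi01 j t Hj ltac:(lra)).
    assert (0 <= beta * rsum N (fun l => w l t * A l j) * (1 - i j t))
      by (repeat apply Rmult_le_pos; lra).
    lra.
  - apply continuous_on_mult, continuous_on_one_minus; auto. }
exact (strictly_convex_subgradient_mono (g j) _ _ _ _ (proj1 (proj2 (proj2 (Hg j Hj))))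
  (Hsub j t1 Hj ltac:(lra)) (Hsub j t2 Hj ltac:(lra)) Hw_antitone).
Qed.
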